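(* Let $l,u,\hbar$ satisfy the standing assumptions below and let $(Y,R)\in C^1_G(0,T)\times C^T_B$ be such that $l_t\le\hat{\mathbb{E}}[\hbar(t,Y_t)]\le u_t$ for all $t\in[0,T]$. Then the minimality condition $$\int_s^t(\hat{\mathbb{E}}[\hbar(v,Y_v)]-l_v)dR_v\le0\quad\text{and}\quad\int_s^t(\hat{\mathbb{E}}[\hbar(v,Y_v)]-u_v)dR_v\le0\qquad\forall\,0\le s\le t\le T$$ is equivalent to the following: for each $0\le s<t\le T$, $R_t\ge R_s$ if $\hat{\mathbb{E}}[\hbar(v,Y_v)]<u_v$ for all $v\in(s,t]$, and $R_t\le R_s$ if $\hat{\mathbb{E}}[\hbar(v,Y_v)]>l_v$ for all $v\in(s,t]$; and for any $v\in[0,T]$, $dR_v\ge0$ if $\hat{\mathbb{E}}[\hbar(v,Y_v)]<u_v$ and $dR_v\le0$ if $\hat{\mathbb{E}}[\hbar(v,Y_v)]>l_v$.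
   Context: Setting: $\hat{\mathbb{E}}$ is the $G$-expectation on $\Omega_T=\{\omega\in C([0,T];\mathbb{R}^d):\omega_0=0\}$ (monotone sublinear non-degenerate $G$); $L^1_G(\Omega_t)$ the completion of bounded Lipschitz cylinder functionals of the canonical process up to $t$ under $\hat{\mathbb{E}}|\cdot|$. $C^1_G(0,T)$: processes $Y$ with $Y_v\in L^1_G(\Omega_v)$ and $v\mapsto Y_v$ continuous in $\hat{\mathbb{E}}|\cdot|$. $C^T_B$: deterministic continuous functions $R$ on $[0,T]$ of bounded variation with $R_0=0$. Standing assumptions: $l,u:[0,T]\to\mathbb{R}$ bounded continuous with $\inf_t(u_t-l_t)>0$; $\hbar:[0,T]\times\Omega_T\times\mathbb{R}\to\mathbb{R}$ with $(t,y)\mapsto\hbar(t,y)$ uniformly continuous uniformly in $\omega$, $y\mapsto\hbar(t,y)$ strictly increasing, $\hbar(t,y)\in L^1_G(\Omega_T)$, $\hat{\mathbb{E}}[\lim_{y\downarrow-\infty}\hbar(t,y)]<\inf_sl_s<\sup_su_s<\hat{\mathbb{E}}[\lim_{y\uparrow\infty}\hbar(t,y)]$, $|\hbar(t,y)|\le C_\hbar(1+|y|)$, $\underline{c}|y-y'|\le|\hbar(t,y)-\hbar(t,y')|\le\overline{c}|y-y'|$ ($C_\hbar>0$, $0<\underline{c}\le\overline{c}$). *)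

From HB Require Import structures.
From mathcomp Require Import all_boot all_order all_algebra.
From mathcomp Require Import all_classical all_reals all_analysis.
Set Implicit Arguments. Unset Strict Implicit. Unset Printing Implicit Defensive.
Import Order.TTheory GRing.Theory Num.Theory.
Import numFieldNormedType.Exports.
Local Open Scope classical_set_scope.
Local Open Scope ring_scope.

(* Abstract sublinear expectation space with a filtration of L^1     *)
(* spaces (an abstraction of (Omega_T, L^1_G(Omega_t), \hat E)).      *)
Record sublinear_space (R : realType) (T : R) := SublinearSpace {
  Omega : Type;
  L1 : R -> set (Omega -> R);
  Ehat : (Omega -> R) -> R;
  L1_incr : forall s t, 0 <= s -> s <= t -> t <= T -> L1 s `<=` L1 t;
  L1_cst : forall t c, L1 t (fun _ => c);
  L1_add : forall t X Y, L1 t X -> L1 t Y -> L1 t (fun w => X w + Y w);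
  L1_scale : forall t (a : R) X, L1 t X -> L1 t (fun w => a * X w);
  L1_abs : forall t X, L1 t X -> L1 t (fun w => `|X w|);
  Ehat_mono : forall X Y, L1 T X -> L1 T Y ->
      (forall w, X w <= Y w) -> Ehat X <= Ehat Y;
  Ehat_cst : forall c : R, Ehat (fun _ => c) = c;
  Ehat_subadd : forall X Y, L1 T X -> L1 T Y ->
      Ehat (fun w => X w + Y w) <= Ehat X + Ehat Y;
  Ehat_poshom : forall (a : R) X, L1 T X -> 0 <= a ->
      Ehat (fun w => a * X w) = a * Ehat X
}.

Arguments Omega {R T} s0.
Arguments L1 {R T} s0 _ _.
Arguments Ehat {R T} s0 _.

Definition C1G (R : realType) (T : R) (S : sublinear_space T)
  (Y : R -> Omega S -> R) : Prop :=
  (forall v, 0 <= v <= T -> L1 S v (Y v)) /\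
  (forall v, 0 <= v <= T -> forall eps : R, 0 < eps ->
     exists2 del : R, 0 < del & forall w, 0 <= w <= T -> `|v - w| < del ->
       Ehat S (fun om => `|Y v om - Y w om|) < eps).

Definition CTB (R : realType) (T : R) (Rf : R -> R) : Prop :=
  {within `[0, T], continuous Rf} /\ bounded_variation 0 T Rf /\ Rf 0 = 0.

Definition barriers_ok (R : realType) (T : R) (l u : R -> R) : Prop :=
  {within `[0, T], continuous l} /\ {within `[0, T], continuous u} /\
  (exists M : R, forall t, 0 <= t <= T -> `|l t| <= M /\ `|u t| <= M) /\
  (exists2 k : R, 0 < k & forall t, 0 <= t <= T -> k <= u t - l t).

Definition hbar_ok (R : realType) (T : R) (S : sublinear_space T)
  (hbar : R -> Omega S -> R -> R) : Prop :=
  (forall eps : R, 0 < eps -> exists2 del : R, 0 < del &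
     forall om t t' y y', 0 <= t <= T -> 0 <= t' <= T ->
       `|t - t'| < del -> `|y - y'| < del ->
       `|hbar t om y - hbar t' om y'| < eps) /\
  (forall t om y y', 0 <= t <= T -> y < y' -> hbar t om y < hbar t om y') /\
  (forall t y, 0 <= t <= T -> L1 S T (fun om => hbar t om y)) /\
  (exists2 C : R, 0 < C & forall t om y, 0 <= t <= T ->
       `|hbar t om y| <= C * (1 + `|y|)) /\
  (exists cl cu : R, 0 < cl /\ cl <= cu /\
     forall t om y y', 0 <= t <= T ->
       cl * `|y - y'| <= `|hbar t om y - hbar t om y'| /\
       `|hbar t om y - hbar t om y'| <= cu * `|y - y'|).

(* A partition is s with a < s_1 < ... < last = b (itv_partition, as in
   mathcomp's variation); the points are nth b (a :: s) i, and the tags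
   xi i lie in the i-th subinterval. *)
Definition RS_sum (R : realType) (f g : R -> R) (a b : R) (s : seq R)
  (xi : nat -> R) : R :=
  let p := nth b (a :: s) in
  \sum_(0 <= i < size s) f (xi i) * (g (p i.+1) - g (p i)).

Definition is_RS_integral (R : realType) (f g : R -> R) (a b I : R) : Prop :=
  forall eps : R, 0 < eps -> exists2 del : R, 0 < del &
    forall (s : seq R) (xi : nat -> R), itv_partition a b s ->
      (forall i, (i < size s)%N ->
         nth b (a :: s) i <= xi i <= nth b (a :: s) i.+1 /\
         nth b (a :: s) i.+1 - nth b (a :: s) i < del) ->
      `|RS_sum f g a b s xi - I| < eps.

Definition RS_int_le0 (R : realType) (f g : R -> R) (a b : R) : Prop :=
  exists I : R, is_RS_integral f g a b I /\ I <= 0.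

(* "dR_v >= 0" / "dR_v <= 0" at a point v of [0,T]: R is nondecreasing
   (resp. nonincreasing) on a neighbourhood of v relative to [0,T]. *)
Definition dR_nonneg_at (R : realType) (T : R) (Rf : R -> R) (v : R) : Prop :=
  exists2 del : R, 0 < del & forall a b, 0 <= a -> b <= T ->
    v - del < a -> a <= b -> b < v + del -> Rf a <= Rf b.

Definition dR_nonpos_at (R : realType) (T : R) (Rf : R -> R) (v : R) : Prop :=
  exists2 del : R, 0 < del & forall a b, 0 <= a -> b <= T ->
    v - del < a -> a <= b -> b < v + del -> Rf b <= Rf a.

(* Put f := E[hbar(v, Y_v)] - u, continuous and nonpositive, and g := R,
   continuous with variation function V.  The upper half of the minimality
   condition, int_s^t f dg <= 0 on every subinterval, is equivalent to: g
   increases across every interval on which f < 0.  Forward: for y <= x <= z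
   close to a point x with f x < 0, the integral over [y, z] is
   f x (g z - g y) up to an error eps (- f x) (V z - V y), so g + eps V is
   locally, hence globally, nondecreasing for every eps > 0.  Backward: the
   integral exists since f is uniformly continuous and g has bounded
   variation, and every cell [x, y] of a partition has a tag w with
   f w (g y - g x) <= 0: its left end if f < 0 on (x, y], a zero of f
   otherwise.  The lower barrier is the same statement for l - E[...] and - R,
   and the pointwise conditions on dR follow from the interval ones since f
   stays negative near a point where it is negative. *)

From HB Require Import structures.
From mathcomp Require Import all_boot all_order all_algebra.
From mathcomp Require Import all_classical all_reals all_analysis.
From mathcomp Require Import ring lra zify.
Import Order.TTheory GRing.Theory Num.Theory.
Import numFieldNormedType.Exports.
Local Open Scope classical_set_scope.
Local Open Scope ring_scope.

Section RealInterval.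
Context {R : realType}.
Implicit Types (a b c d x : R) (s : seq R) (f g : R -> R).

Lemma itv_partition_nth_lt {a b s} : itv_partition a b s ->
  forall i, (i < size s)%N -> nth b (a :: s) i < nth b (a :: s) i.+1.
Proof.
elim: s a => [//|p s IH] a Hp [_|i iS] /=; first by case: Hp => /= /andP[].
exact: (IH p (itv_partition_cons Hp)).
Qed.

Lemma itv_partition_nth_in {a b s} : itv_partition a b s ->
  forall i, (i <= size s)%N -> a <= nth b (a :: s) i <= b.
Proof.
move=> Hp i iS.
by rewrite (itv_partition_nth_ge _ Hp) ?(itv_partition_nth_le _ Hp) // ltnS.
Qed.

Lemma fine_itv_partition {a b d} : a < b -> 0 < d ->
  exists2 s, itv_partition a b s &
    forall i, (i < size s)%N -> nth b (a :: s) i.+1 - nth b (a :: s) i < d.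
Proof.
move=> ab d0.
have [n hn] : exists n : nat, (b - a) / d < n%:R.
  by eexists; apply: archi_boundP; rewrite divr_ge0 // ?subr_ge0 ltW.
pose p i := a + (b - a) * (i%:R / n.+1%:R).
have n0 : 0 < n.+1%:R :> R by rewrite ltr0n.
have pS i : p i.+1 - p i = (b - a) / n.+1%:R.
  by rewrite /p -natr1; field; rewrite gt_eqF.
have p_incr i : p i < p i.+1 by rewrite -subr_gt0 pS divr_gt0 // subr_gt0.
have p0 : p 0%N = a by rewrite /p mul0r mulr0 addr0.
have pN : p n.+1 = b by rewrite /p divff ?mulr1 ?subrKC // gt_eqF.
have nthE i : (i <= n.+1)%N -> nth b (a :: [seq p i | i <- iota 1 n.+1]) i = p i.
  case: i => [|i] hi; first by rewrite p0.
  rewrite -[nth b _ i.+1]/(nth b [seq p i | i <- iota 1 n.+1] i).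
  by rewrite (nth_map 0%N) ?size_iota // nth_iota.
exists [seq p i | i <- iota 1 n.+1].
  split; last by rewrite (last_nth b) size_map size_iota nthE // pN.
  rewrite -{1}p0; elim: (n.+1) (0%N) => [//|k IH] m /=.
  by rewrite p_incr IH.
move=> i; rewrite size_map size_iota => hi.
rewrite nthE // nthE 1?ltnW // pS ltr_pdivrMr // -ltr_pdivrMl // mulrC.
by apply: (lt_le_trans hn); rewrite ler_nat.
Qed.

Lemma real_induction a b (P : R -> Prop) : a <= b -> P a ->
  (forall x, a <= x -> x < b -> P x ->
     exists2 d, 0 < d & forall y, x < y -> y < x + d -> y <= b -> P y) ->
  (forall x, a < x -> x <= b -> (forall y, a <= y -> y < x -> P y) -> P x) ->
  P b.
Proof.
move=> ab Pa right_step left_step.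
pose A := [set x | a <= x <= b /\ forall y, a <= y <= x -> P y].
have Aa : A a.
  split=> [|y /andP[ay ya]]; first by rewrite lexx ab.
  by have -> : y = a by apply/le_anti; rewrite ay ya.
have supA : has_sup A by split; [exists a | exists b => x [/andP[]]].
set m := sup A.
have am : a <= m by apply: sup_upper_bound.
have mb : m <= b by apply: ge_sup => [|x [/andP[]]]; first by exists a.
have below_m y : a <= y -> y < m -> P y.
  move=> ay ym; have ym0 : 0 < m - y by rewrite subr_gt0.
  have [x [_ Px] yx] := sup_adherent ym0 supA.
  by apply: Px; rewrite ay /=; move: yx; rewrite opprB subrKC => /ltW.
have Pm : P m.
  have [<-|am'] := eqVneq a m; first by [].
  by apply: left_step => //; rewrite lt_neqAle am' am.
have Am : A m.
  split=> [|y /andP[ay ym]]; first by rewrite am mb.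
  have [/below_m|my] := ltP y m; first exact.
  by have -> : y = m by apply/le_anti; rewrite ym my.
have [mb'|bm] := ltP m b; last by have <- : m = b by apply/le_anti; rewrite mb bm.
have [d d0 Pd] := right_step m am mb' Pm.
have [k k0 [kd kbm]] : exists2 k, 0 < k & k <= d /\ k <= b - m.
  by exists (Num.min d (b - m)); rewrite ?lt_min ?ge_min ?lexx ?orbT ?d0 ?subr_gt0.
have Amk : A (m + k / 2).
  split=> [|y /andP[ay yk]]; first by apply/andP; split; lra.
  have [ym|my] := leP y m; first by case: Am => _; apply; rewrite ay ym.
  by apply: Pd => //; lra.
have := sup_upper_bound supA Amk; rewrite -/m; lra.
Qed.

Lemma le_locally_nondecreasing (phi : R -> R) a b : a <= b ->
  (forall x, a <= x <= b -> exists2 d, 0 < d & forall y z, a <= y -> y <= x ->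
     x <= z -> z <= b -> x - y < d -> z - x < d -> phi y <= phi z) ->
  phi a <= phi b.
Proof.
move=> ab loc; apply: (@real_induction a b (fun x => phi a <= phi x)) => //.
- move=> x ax xb ax_le; have /loc[d d0 Hd] : a <= x <= b by rewrite ax ltW.
  exists d => // y xy yd yb; apply: (le_trans ax_le); apply: Hd; lra.
- move=> x ax xb below; have /loc[d d0 Hd] : a <= x <= b by rewrite xb ltW.
  set y := Num.max a (x - d / 2).
  have ay : a <= y by rewrite le_max lexx.
  have yx : y < x by rewrite gt_max ax; lra.
  have xy : x - d / 2 <= y by rewrite le_max lexx orbT.
  apply: le_trans (below _ ay yx) _; apply: Hd => //; lra.
Qed.

Definition continuous_on_itv f a b := forall x, a <= x <= b ->
  forall eps, 0 < eps -> exists2 d, 0 < d &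
    forall y, a <= y <= b -> `|x - y| < d -> `|f x - f y| < eps.

Definition unif_continuous_on_itv f a b := forall eps, 0 < eps ->
  exists2 d, 0 < d & forall y z, a <= y <= b -> a <= z <= b ->
    `|y - z| < d -> `|f y - f z| < eps.

Lemma within_continuous_on_itv {f a b} :
  {within `[a, b], continuous f} -> continuous_on_itv f a b.
Proof.
move=> cf x xab eps eps0.
have xA : [set` `[a, b]] x by rewrite /= in_itv /= xab.
have /cvgrPdist_lt /(_ eps eps0) := (subspace_continuousP _ _).1 cf x xA.
rewrite near_withinE => /nbhs_ballP [d /= d0 Hd].
exists d => // y yab xy; apply: Hd; first by rewrite -ball_normE.
by rewrite /= in_itv /= yab.
Qed.

Lemma continuous_on_subitv {f a b a' b'} : continuous_on_itv f a b ->
  a <= a' -> b' <= b -> continuous_on_itv f a' b'.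
Proof.
move=> cf aa' b'b x /andP[x1 x2] eps eps0.
have /cf/(_ _ eps0)[d d0 Hd] : a <= x <= b.
  by rewrite (le_trans aa' x1) (le_trans x2 b'b).
exists d => // y /andP[y1 y2]; apply: Hd.
by rewrite (le_trans aa' y1) (le_trans y2 b'b).
Qed.

Lemma continuous_on_itvN {f a b} : continuous_on_itv f a b ->
  continuous_on_itv (fun x => - f x) a b.
Proof.
move=> cf x xab eps eps0; have [d d0 Hd] := cf x xab _ eps0.
by exists d => // y yab xy; rewrite -opprD normrN; apply: Hd.
Qed.

Lemma continuous_on_itvB {f g a b} : continuous_on_itv f a b ->
  continuous_on_itv g a b -> continuous_on_itv (fun x => f x - g x) a b.
Proof.
move=> cf cg x xab eps eps0; have eps2 : 0 < eps / 2 by rewrite divr_gt0.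
have [df df0 Hf] := cf x xab _ eps2; have [dg dg0 Hg] := cg x xab _ eps2.
exists (Num.min df dg) => [|y yab]; first by rewrite lt_min df0 dg0.
rewrite lt_min => /andP[/(Hf y yab) + /(Hg y yab)].
by rewrite !ltr_distlC => /andP[? ?] /andP[? ?]; apply/andP; split; lra.
Qed.

Lemma le_continuous_left_end {g a b} {s t k : R} : continuous_on_itv g a b ->
  a <= s -> s < t -> t <= b -> (forall x, s < x <= t -> g x <= k) -> g s <= k.
Proof.
move=> cg a_s st tb gk; rewrite leNgt; apply/negP => kgs.
have sab : a <= s <= b by rewrite a_s (le_trans (ltW st)).
have ks : 0 < g s - k by rewrite subr_gt0.
have [d d0 Hd] := cg s sab _ ks.
have [m m0 [md mt]] : exists2 m, 0 < m & m <= d / 2 /\ m <= t - s.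
  exists (Num.min (d / 2) (t - s)); first by rewrite lt_min subr_gt0 st divr_gt0.
  by rewrite !ge_min !lexx orbT.
have xab : a <= s + m <= b by apply/andP; split; lra.
have xs : `|s - (s + m)| < d by rewrite ltr_distlC; apply/andP; split; lra.
have gxk : g (s + m) <= k by apply: gk; apply/andP; split; lra.
by have := Hd _ xab xs; rewrite ltr_distlC => /andP[? _]; lra.
Qed.

Lemma unif_continuous_glue {f a m c} x dx {d0 eps} :
  (forall y z, a <= y <= m -> a <= z <= m -> `|y - z| < d0 -> `|f y - f z| < eps) ->
  (forall y, a <= y <= c -> `|x - y| < dx -> `|f x - f y| < eps / 2) ->
  (forall y, m < y <= c -> `|x - y| < dx / 2) ->
  forall y z, a <= y <= c -> a <= z <= c -> `|y - z| < Num.min d0 (dx / 2) ->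
    `|f y - f z| < eps.
Proof.
move=> Hm Hx near_x.
have far y z : a <= y <= c -> a <= z <= c -> m < y -> `|y - z| < dx / 2 ->
    `|f y - f z| < eps.
  move=> /andP[ay yc] zac my yz.
  have xy : `|x - y| < dx / 2 by apply: near_x; rewrite my.
  have xz : `|x - z| < dx.
    by apply: le_lt_trans (ler_distD y _ _) _; rewrite (splitr dx) ltrD.
  have xy' : `|x - y| < dx by have := normr_ge0 (x - y); lra.
  rewrite (splitr eps); apply: le_lt_trans (ler_distD (f x) _ _) _.
  by rewrite distrC ltrD // Hx // ay yc.
move=> y z yac zac; rewrite lt_min => /andP[yz0 yz1].
have [ym|my] := leP y m; last exact: far.
have [zm|mz] := leP z m; last by rewrite distrC; apply: far; rewrite // distrC.
move: yac zac => /andP[ay _] /andP[az _].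
by apply: Hm; rewrite ?ay ?az.
Qed.

Lemma continuous_on_itv_unif {f a b} : a <= b -> continuous_on_itv f a b ->
  unif_continuous_on_itv f a b.
Proof.
move=> ab cf eps eps0.
pose P c := exists2 d, 0 < d & forall y z, a <= y <= c -> a <= z <= c ->
  `|y - z| < d -> `|f y - f z| < eps.
suff [d d0 Hd] : P b by exists d.
have eps2 : 0 < eps / 2 by rewrite divr_gt0.
apply: (@real_induction a b P ab).
- exists 1 => // y z /andP[ay ya] /andP[az za] _.
  have -> : y = a by apply/le_anti; rewrite ay ya.
  have -> : z = a by apply/le_anti; rewrite az za.
  by rewrite subrr normr0.
- move=> x ax xb [d0 d00 Hd0].
  have /cf/(_ _ eps2)[dx dx0 Hx] : a <= x <= b by rewrite ax ltW.
  exists (dx / 2) => [|c xc cx cb]; first by rewrite divr_gt0.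
  exists (Num.min d0 (dx / 2)); first by rewrite lt_min d00 divr_gt0.
  apply: (unif_continuous_glue x dx Hd0).
  + by move=> y /andP[ay yc]; apply: Hx; rewrite ay (le_trans yc cb).
  + by move=> y /andP[xy yc]; rewrite ltr_distlC; apply/andP; split; lra.
- move=> x ax xb below.
  have /cf/(_ _ eps2)[dx dx0 Hx] : a <= x <= b by rewrite xb ltW.
  set m := Num.max a (x - dx / 2).
  have am : a <= m by rewrite le_max lexx.
  have mx : m < x by rewrite gt_max ax; lra.
  have xm : x - dx / 2 <= m by rewrite le_max lexx orbT.
  have [d0 d00 Hd0] := below m am mx.
  exists (Num.min d0 (dx / 2)); first by rewrite lt_min d00 divr_gt0.
  apply: (unif_continuous_glue x dx Hd0).
  + by move=> y /andP[ay yx]; apply: Hx; rewrite ay (le_trans yx xb).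
  + by move=> y /andP[my yx]; rewrite ltr_distlC; apply/andP; split; lra.
Qed.

End RealInterval.

Section StieltjesSum.
Context {R : realType}.
Implicit Types (a b x m eps k : R) (s t : seq R) (f g V : R -> R) (c d : nat -> R).

Definition stieltjes_sum g a b s c :=
  \sum_(0 <= i < size s) c i * (g (nth b (a :: s) i.+1) - g (nth b (a :: s) i)).

Definition dominates_increments V g a b :=
  forall y z, a <= y -> y <= z -> z <= b -> `|g z - g y| <= V z - V y.

Definition coefs_near f eps a b s c := forall i, (i < size s)%N ->
  forall y, nth b (a :: s) i <= y <= nth b (a :: s) i.+1 -> `|c i - f y| <= eps.

Lemma stieltjes_sum_nil g a b c : stieltjes_sum g a b [::] c = 0.
Proof. by rewrite /stieltjes_sum big_geq. Qed.

Lemma stieltjes_sum_cons g a b p s c : stieltjes_sum g a b (p :: s) c =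
  c 0%N * (g p - g a) + stieltjes_sum g p b s (fun i => c i.+1).
Proof. by rewrite /stieltjes_sum /= big_nat_recl. Qed.

Lemma stieltjes_sumB g a b s c d : stieltjes_sum g a b s (fun i => c i - d i) =
  stieltjes_sum g a b s c - stieltjes_sum g a b s d.
Proof. by rewrite /stieltjes_sum -sumrB; apply: eq_bigr => i _; rewrite mulrBl. Qed.

Lemma stieltjes_sum_cst {a b s} g k : itv_partition a b s ->
  stieltjes_sum g a b s (fun=> k) = k * (g b - g a).
Proof.
elim: s a => [|p s IH] a Hp.
  by rewrite stieltjes_sum_nil -(itv_partition_nil Hp) subrr mulr0.
by rewrite stieltjes_sum_cons (IH p (itv_partition_cons Hp)); ring.
Qed.

Lemma dominates_incrementsW {V g a b a' b'} : dominates_increments V g a b ->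
  a <= a' -> b' <= b -> dominates_increments V g a' b'.
Proof.
move=> HV aa' b'b y z a'y yz zb'.
by apply: HV => //; [exact: le_trans a'y | exact: le_trans b'b].
Qed.

Lemma dominates_incrementsN {V g a b} : dominates_increments V g a b ->
  dominates_increments V (fun x => - g x) a b.
Proof. by move=> HV y z ay yz zb; rewrite -opprD normrN; apply: HV. Qed.

Lemma stieltjes_sum_norm_le g V a b s c eps : itv_partition a b s ->
  dominates_increments V g a b -> (forall i, (i < size s)%N -> `|c i| <= eps) ->
  `|stieltjes_sum g a b s c| <= eps * (V b - V a).
Proof.
elim: s a c => [|p s IH] a c Hp HV Hc.
  by rewrite stieltjes_sum_nil -(itv_partition_nil Hp) normr0 subrr mulr0.
have Hs := itv_partition_cons Hp.
have ap : a < p by case: Hp => /= /andP[].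
have pb := itv_partition_le Hs.
rewrite stieltjes_sum_cons; apply: le_trans (ler_normD _ _) _.
have -> : eps * (V b - V a) = eps * (V p - V a) + eps * (V b - V p) by ring.
apply: lerD; first by rewrite normrM ler_pM // ?Hc // HV // ltW.
apply: IH => // [|i]; first exact: dominates_incrementsW HV (ltW ap) _.
exact: Hc i.+1.
Qed.

Lemma stieltjes_sum_split {f} g {eps x b m q t d} : x < m -> m <= q ->
  itv_partition x b (q :: t) -> coefs_near f eps x b (q :: t) d ->
  exists t' d', [/\ itv_partition m b t', coefs_near f eps m b t' d',
    stieltjes_sum g x b (q :: t) d = d 0%N * (g m - g x) + stieltjes_sum g m b t' d'
    & (size t' <= (size t).+1)%N].
Proof.
move=> xm mq Hp Hd; have [eq_mq|neq_mq] := eqVneq m q.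
  subst q; exists t, (fun i => d i.+1); split => //; first exact: itv_partition_cons Hp.
  - by move=> i; apply: (Hd i.+1).
  - by rewrite stieltjes_sum_cons.
have mq' : m < q by rewrite lt_neqAle neq_mq mq.
exists (q :: t), d; split => //.
- by case: Hp => /= /andP[_ qt] tb; split; rewrite /= ?mq' ?qt.
- move=> [|i] it y Hy; last exact: (Hd i.+1).
  apply: (Hd 0%N) => //=; move: Hy => /andP[my yq].
  by rewrite yq (le_trans (ltW xm) my).
- by rewrite !stieltjes_sum_cons; ring.
Qed.

Lemma stieltjes_sum_near_dist {f g V b e1 e2 x s t c d} :
  dominates_increments V g x b -> itv_partition x b s -> itv_partition x b t ->
  coefs_near f e1 x b s c -> coefs_near f e2 x b t d ->
  `|stieltjes_sum g x b s c - stieltjes_sum g x b t d| <= (e1 + e2) * (V b - V x).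
Proof.
move: {2}(size s + size t).+1 (ltnSn (size s + size t)) => n.
elim: n x s t c d e1 e2 => [|n IH] x s t c d e1 e2 Hn HV Hs Ht Hc Hd.
  by rewrite ltn0 in Hn.
case: s Hn Hs Hc => [|p s] Hn Hs Hc.
  move: Ht; rewrite -(itv_partition_nil Hs) => /itv_partitionxx ->.
  by rewrite !stieltjes_sum_nil subrr normr0 subrr mulr0.
case: t Hn Ht Hd => [|q t] Hn Ht Hd.
  by move: Hs; rewrite -(itv_partition_nil Ht) => /itv_partitionxx.
(* Cut both sums at the nearer of their first division points; the peeled-off
   cells carry coefficients within e1 + e2 of each other, both being close to
   [f x]. *)
wlog pq : p q s t c d e1 e2 Hn Hs Ht Hc Hd / p <= q.
  move=> W; have [|/ltW qp] := leP p q; first exact: W.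
  by rewrite distrC (addrC e1); apply: W; rewrite // addnC.
have xp : x < p by case: Hs => /= /andP[].
have [t' [d' [Ht' Hd' -> size_t']]] := stieltjes_sum_split g xp pq Ht Hd.
rewrite stieltjes_sum_cons.
set S := stieltjes_sum g p b s _; set S' := stieltjes_sum g p b t' d'.
have -> : c 0%N * (g p - g x) + S - (d 0%N * (g p - g x) + S') =
    (c 0%N - d 0%N) * (g p - g x) + (S - S') by ring.
have -> : (e1 + e2) * (V b - V x) = (e1 + e2) * (V p - V x) + (e1 + e2) * (V b - V p).
  by ring.
apply: le_trans (ler_normD _ _) (lerD _ _).
  have xx : x <= x <= p by rewrite lexx ltW.
  have cx := Hc 0%N isT x xx.
  have dx : `|f x - d 0%N| <= e2.
    by rewrite distrC; apply: (Hd 0%N) => //; rewrite lexx (le_trans (ltW xp) pq).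
  rewrite normrM; apply: ler_pM => //; last first.
    apply: HV; [exact: lexx | exact: ltW |].
    exact: itv_partition_le (itv_partition_cons Hs).
  exact: le_trans (ler_distD (f x) _ _) (lerD cx dx).
apply: IH => //.
- by move: Hn size_t' => /=; lia.
- exact: dominates_incrementsW HV (ltW xp) (lexx b).
- exact: itv_partition_cons Hs.
- by move=> i; apply: (Hc i.+1).
Qed.

End StieltjesSum.

Section StieltjesIntegral.
Context {R : realType}.
Implicit Types (a b w x eps I : R) (s : seq R) (f g V : R -> R) (xi : nat -> R).

Lemma RS_sumE f g a b s xi :
  RS_sum f g a b s xi = stieltjes_sum g a b s (fun i => f (xi i)).
Proof. by []. Qed.

Lemma coefs_near_tags f a b s xi eps del : itv_partition a b s ->
  (forall y z, a <= y <= b -> a <= z <= b -> `|y - z| < del -> `|f y - f z| < eps) ->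
  (forall i, (i < size s)%N -> nth b (a :: s) i <= xi i <= nth b (a :: s) i.+1 /\
     nth b (a :: s) i.+1 - nth b (a :: s) i < del) ->
  coefs_near f eps a b s (fun i => f (xi i)).
Proof.
move=> Hs Hf Ht i iS y /andP[y1 y2]; have [/andP[x1 x2] mesh] := Ht i iS.
have /andP[p1 _] := itv_partition_nth_in Hs i (ltnW iS).
have /andP[_ p2] := itv_partition_nth_in Hs i.+1 iS.
apply/ltW/Hf; rewrite ?(le_trans p1 x1) ?(le_trans x2 p2) //.
  by rewrite (le_trans p1 y1) (le_trans y2 p2).
by rewrite ltr_distlC; apply/andP; split; lra.
Qed.

Lemma itv_partition_left_tags {a b s del} : itv_partition a b s ->
  (forall i, (i < size s)%N -> nth b (a :: s) i.+1 - nth b (a :: s) i < del) ->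
  forall i, (i < size s)%N ->
    nth b (a :: s) i <= nth b (a :: s) i <= nth b (a :: s) i.+1 /\
    nth b (a :: s) i.+1 - nth b (a :: s) i < del.
Proof. by move=> Hs mesh i iS; rewrite lexx ltW ?(itv_partition_nth_lt Hs) ?mesh. Qed.

Lemma is_RS_integral_exists {f g V a b} : a < b -> unif_continuous_on_itv f a b ->
  dominates_increments V g a b -> exists I, is_RS_integral f g a b I.
Proof.
move=> ab uf HV; set W := V b - V a.
have W0 : 0 <= W := le_trans (normr_ge0 _) (HV a b (lexx a) (ltW ab) (lexx b)).
(* The lower estimates [S - e W] of e-fine sums [S] lie below all the upper
   estimates [S' + e' W]; their supremum is the integral. *)
pose A := [set x | exists e s c, [/\ 0 < e, itv_partition a b s,
  coefs_near f e a b s c & x = stieltjes_sum g a b s c - e * W]].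
have A_ub e s c : 0 < e -> itv_partition a b s -> coefs_near f e a b s c ->
    ubound A (stieltjes_sum g a b s c + e * W).
  move=> e0 Hs Hc _ [e' [s' [c' [e0' Hs' Hc' ->]]]].
  have /ler_distlDr := stieltjes_sum_near_dist HV Hs' Hs Hc' Hc.
  by rewrite -/W mulrDl; lra.
have A_sup e s c : 0 < e -> itv_partition a b s -> coefs_near f e a b s c ->
    `|sup A - stieltjes_sum g a b s c| <= e * W.
  move=> e0 Hs Hc; have supA : has_sup A.
    split; first by exists (stieltjes_sum g a b s c - e * W), e, s, c.
    by exists (stieltjes_sum g a b s c + e * W); exact: A_ub.
  have : stieltjes_sum g a b s c - e * W <= sup A.
    by apply: sup_upper_bound => //; exists e, s, c.
  have : sup A <= stieltjes_sum g a b s c + e * W.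
    by apply: ge_sup; [case: supA | exact: A_ub].
  by rewrite ler_distlC => ? ?; apply/andP; split; lra.
exists (sup A) => eps eps0; set e := eps / (W + 1).
have e0 : 0 < e by rewrite divr_gt0 //; lra.
have eW : e * W < eps.
  by rewrite /e mulrAC ltr_pdivrMr ?ltr_pM2l //; lra.
have [del del0 Hdel] := uf e e0.
exists del => // s xi Hs tags; rewrite RS_sumE distrC.
apply: le_lt_trans eW; apply: A_sup => //; exact: coefs_near_tags Hs Hdel tags.
Qed.

Lemma is_RS_integral_xx f g a : is_RS_integral f g a a 0.
Proof.
move=> eps eps0; exists 1 => // s xi /itv_partitionxx -> _.
by rewrite RS_sumE stieltjes_sum_nil subrr normr0.
Qed.

Lemma RS_int_le0N f g a b :
  RS_int_le0 (fun v => - f v) (fun v => - g v) a b <-> RS_int_le0 f g a b.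
Proof.
rewrite /RS_int_le0 /is_RS_integral.
suff -> : RS_sum (fun v => - f v) (fun v => - g v) a b = RS_sum f g a b by [].
by apply/funext => s; apply/funext => xi; apply: eq_bigr => i _; ring.
Qed.

Lemma is_RS_integral_tag {f g V a b w eps I} : a < b -> dominates_increments V g a b ->
  is_RS_integral f g a b I -> a <= w <= b ->
  (forall y, a <= y <= b -> `|f w - f y| <= eps) ->
  `|I - f w * (g b - g a)| <= eps * (V b - V a).
Proof.
move=> ab HV HI wab Hw; apply/ler_addgt0Pr => e e0.
have [del del0 Hdel] := HI e e0.
have [s Hs mesh] := fine_itv_partition ab del0.
set xi := nth b (a :: s).
have /ltW close := Hdel s xi Hs (itv_partition_left_tags Hs mesh).
have tag_sum : `|RS_sum f g a b s xi - f w * (g b - g a)| <= eps * (V b - V a).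
  rewrite RS_sumE -(stieltjes_sum_cst g (f w) Hs) -stieltjes_sumB.
  apply: stieltjes_sum_norm_le => // i iS; rewrite distrC; apply: Hw.
  exact: itv_partition_nth_in Hs i (ltnW iS).
apply: le_trans (ler_distD (RS_sum f g a b s xi) _ _) _.
by rewrite [X in _ <= X]addrC lerD // distrC.
Qed.

Lemma is_RS_integral_le0 {f g a b I} : a < b -> is_RS_integral f g a b I ->
  (forall x y, a <= x -> x < y -> y <= b ->
     exists2 w, x <= w <= y & f w * (g y - g x) <= 0) ->
  I <= 0.
Proof.
move=> ab HI Htag; apply/ler_addgt0Pr => e e0; rewrite add0r.
have [del del0 Hdel] := HI e e0.
have [s Hs mesh] := fine_itv_partition ab del0.
set p := nth b (a :: s).
have /choice[xi Hxi] : forall i, exists w, (i < size s)%N ->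
    p i <= w <= p i.+1 /\ f w * (g (p i.+1) - g (p i)) <= 0.
  move=> i; have [iS|] := ltnP i (size s); last by exists 0.
  have /andP[p1 _] := itv_partition_nth_in Hs i (ltnW iS).
  have /andP[_ p2] := itv_partition_nth_in Hs i.+1 iS.
  by have [w ? ?] := Htag _ _ p1 (itv_partition_nth_lt Hs i iS) p2; exists w.
have := Hdel s xi Hs (fun i iS => conj (Hxi i iS).1 (mesh i iS)).
have : RS_sum f g a b s xi <= 0.
  by rewrite /RS_sum big_nat_cond; apply: sumr_le0 => i /andP[/andP[_ /Hxi[]]].
by rewrite ltr_distlC => ? /andP[? ?]; lra.
Qed.

End StieltjesIntegral.

Section Minimality.
Context {R : realType}.
Implicit Types (a b x y z v eps : R) (f g V : R -> R).

Definition RS_int_le0_on f g a b :=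
  forall s t, a <= s -> s <= t -> t <= b -> RS_int_le0 f g s t.

Definition nondecreasing_where_neg f g a b := forall s t, a <= s -> s < t -> t <= b ->
  (forall v, s < v <= t -> f v < 0) -> g s <= g t.

Lemma RS_int_le0_nondecreasing {f g V a b} : a <= b -> continuous_on_itv f a b ->
  dominates_increments V g a b -> (forall y, a <= y <= b -> f y < 0) ->
  (forall x y, a <= x -> x < y -> y <= b -> RS_int_le0 f g x y) -> g a <= g b.
Proof.
move=> ab cf HV fneg Hint; set W := V b - V a.
have W0 : 0 <= W := le_trans (normr_ge0 _) (HV a b (lexx a) ab (lexx b)).
suff Heps eps : 0 < eps -> g a + eps * V a <= g b + eps * V b.
  apply/ler_addgt0Pr => e e0.
  have eps0 : 0 < e / (W + 1) by rewrite divr_gt0 //; lra.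
  have eW : e / (W + 1) * W <= e.
    by rewrite mulrAC ler_pdivrMr ?ler_pM2l //; lra.
  by have := Heps _ eps0; rewrite /W in eW; lra.
move=> eps0.
apply: (le_locally_nondecreasing (fun x => g x + eps * V x)) => // x xab.
have eta0 : 0 < eps * - f x by rewrite mulr_gt0 // oppr_gt0 fneg.
have [d d0 Hd] := cf x xab _ eta0.
exists d => // y z ay yx xz zb xy zx.
have [<-|neq_yz] := eqVneq y z; first exact: lexx.
have yz : y < z by rewrite lt_neqAle neq_yz (le_trans yx xz).
have [I [HI I0]] := Hint y z ay yz zb.
have tag : `|I - f x * (g z - g y)| <= eps * - f x * (V z - V y).
  apply: (is_RS_integral_tag yz (dominates_incrementsW HV ay zb) HI).
    by rewrite yx xz.
  move=> u /andP[yu uz]; apply/ltW/Hd.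
    by rewrite (le_trans ay yu) (le_trans uz zb).
  by rewrite ltr_distlC; apply/andP; split; lra.
have : 0 <= - f x * ((g z - g y) + eps * (V z - V y)).
  by move: tag; rewrite ler_distlC => /andP[_ ?]; rewrite mulrDr; lra.
by rewrite pmulr_rge0 ?oppr_gt0 ?fneg //; lra.
Qed.

Lemma RS_int_le0_onP {f g V a b} : continuous_on_itv f a b ->
  continuous_on_itv g a b -> dominates_increments V g a b ->
  (forall v, a <= v <= b -> f v <= 0) ->
  RS_int_le0_on f g a b <-> nondecreasing_where_neg f g a b.
Proof.
move=> cf cg HV fle0; split=> [Hint s t a_s st tb fneg | Hmono s t a_s st tb].
  apply: (le_continuous_left_end cg a_s st tb) => x /andP[sx xt].
  have ax : a <= x by rewrite (le_trans a_s) ?ltW.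
  apply: (RS_int_le0_nondecreasing xt (continuous_on_subitv cf ax tb)).
  - exact: dominates_incrementsW HV ax tb.
  - by move=> y /andP[xy yt]; apply: fneg; rewrite yt (lt_le_trans sx xy).
  - move=> y z xy yz zt; apply: Hint; rewrite ?(ltW yz) //.
    + exact: le_trans ax xy.
    + exact: le_trans zt tb.
have [<-|neq_st] := eqVneq s t.
  by exists 0; split; first exact: is_RS_integral_xx.
have {neq_st}st' : s < t by rewrite lt_neqAle neq_st st.
have cf' := continuous_on_subitv cf a_s tb.
have [I HI] := is_RS_integral_exists st' (continuous_on_itv_unif st cf')
  (dominates_incrementsW HV a_s tb).
exists I; split => //; apply: (is_RS_integral_le0 st' HI) => x y sx xy yt.
have fx0 v : x <= v <= y -> f v <= 0.
  move=> /andP[xv vy]; apply: fle0.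
  by rewrite (le_trans a_s (le_trans sx xv)) (le_trans vy (le_trans yt tb)).
have [fneg|] := pselect (forall v, x < v <= y -> f v < 0).
  exists x; first by rewrite lexx ltW.
  apply: mulr_le0_ge0; first by rewrite fx0 // lexx ltW.
  by rewrite subr_ge0; apply: Hmono fneg; rewrite ?(le_trans a_s sx) ?(le_trans yt tb).
move=> /existsNP[v /not_implyP[/andP[xv vy] /negP]]; rewrite -leNgt => fv_ge0.
exists v; first by rewrite ltW.
have -> : f v = 0 by apply/le_anti; rewrite fv_ge0 fx0 // ltW.
by rewrite mul0r.
Qed.

Lemma nondecreasing_where_neg_dR {T f g v} : continuous_on_itv f 0 T ->
  nondecreasing_where_neg f g 0 T -> 0 <= v <= T -> f v < 0 -> dR_nonneg_at T g v.
Proof.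
move=> cf Hmono vT fv; have /(cf v vT)[d d0 Hd] : 0 < - f v by rewrite oppr_gt0.
exists d => // x y x0 yT vx xy yv.
have [<-|neq_xy] := eqVneq x y; first exact: lexx.
apply: Hmono; rewrite // ?lt_neqAle ?neq_xy // => w /andP[xw wy].
have : `|f v - f w| < - f v.
  apply: Hd; first by rewrite (le_trans x0 (ltW xw)) (le_trans wy yT).
  by rewrite ltr_distlC; apply/andP; split; lra.
by rewrite ltr_distlC => /andP[_ ?]; lra.
Qed.

Lemma dR_nonpos_atN T g v : dR_nonneg_at T (fun x => - g x) v -> dR_nonpos_at T g v.
Proof. by move=> [d d0 Hd]; exists d => // x y *; rewrite -lerN2 Hd. Qed.

End Minimality.

Lemma bounded_variation_dominates {R : realType} {a b : R} {g : R -> R} :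
  bounded_variation a b g ->
  dominates_increments (fun x => fine (total_variation a x g)) g a b.
Proof.
move=> bv y z ay yz zb.
have az := le_trans ay yz.
have bz := bounded_variationl az zb bv.
have fy : total_variation a y g \is a fin_num.
  exact: (bounded_variationP g ay).1 (bounded_variationl ay yz bz).
have fyz : total_variation y z g \is a fin_num.
  exact: (bounded_variationP g yz).1 (bounded_variationr ay yz bz).
rewrite (total_variationD g ay yz) fineD // addrAC subrr add0r -lee_fin fineK //.
exact: total_variation_ge.
Qed.

Section SublinearExpectation.
Context {R : realType} {T : R} {S : sublinear_space T}.
Implicit Types (X Z : Omega S -> R).

Lemma L1_sub {t X Z} : L1 S t X -> L1 S t Z -> L1 S t (fun w => X w - Z w).
Proof.
move=> LX LZ; have -> : (fun w => X w - Z w) = (fun w => X w + (-1) * Z w).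
  by apply/funext => w; rewrite mulN1r.
exact: L1_add LX (L1_scale _ LZ).
Qed.

Lemma Ehat_sub_le {X Z} : L1 S T X -> L1 S T Z ->
  Ehat S X - Ehat S Z <= Ehat S (fun w => `|X w - Z w|).
Proof.
move=> LX LZ; have LXZ := L1_sub LX LZ.
have := Ehat_subadd LZ LXZ; have -> : (fun w => Z w + (X w - Z w)) = X.
  by apply/funext => w; rewrite addrC subrK.
have : Ehat S (fun w => X w - Z w) <= Ehat S (fun w => `|X w - Z w|).
  by apply: Ehat_mono => // [|w]; [exact: L1_abs | exact: ler_norm].
lra.
Qed.

Lemma Ehat_dist {X Z} : L1 S T X -> L1 S T Z ->
  `|Ehat S X - Ehat S Z| <= Ehat S (fun w => `|X w - Z w|).
Proof.
move=> LX LZ; rewrite ler_norml Ehat_sub_le // andbT.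
have := Ehat_sub_le LZ LX.
have -> : (fun w => `|Z w - X w|) = (fun w => `|X w - Z w|).
  by apply/funext => w; rewrite distrC.
lra.
Qed.

Lemma Ehat_hbar_continuous {hbar : R -> Omega S -> R -> R} {Y : R -> Omega S -> R} :
  hbar_ok hbar -> C1G Y ->
  (forall t, 0 <= t <= T -> L1 S T (fun om => hbar t om (Y t om))) ->
  continuous_on_itv (fun v => Ehat S (fun om => hbar v om (Y v om))) 0 T.
Proof.
move=> [hunif [_ [_ [_ [cl [cu [cl0 [clcu hlip]]]]]]]] [YL1 Ycont] HL x xT eps eps0.
have cu1 : 0 < cu + 1 by lra.
have eps2 : 0 < eps / 2 by rewrite divr_gt0.
have eta0 : 0 < eps / 2 / (cu + 1) by rewrite divr_gt0.
have [d1 d10 Hd1] := hunif _ eps2.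
have [d2 d20 Hd2] := Ycont x xT _ eta0.
exists (Num.min d1 d2) => [|y yT]; first by rewrite lt_min d10 d20.
rewrite lt_min => /andP[xy1 xy2].
have LY v : 0 <= v <= T -> L1 S T (Y v).
  by move=> /[dup] vT /andP[v0 v_T]; exact: L1_incr v0 v_T (lexx T) _ (YL1 v vT).
have LdY := L1_abs (L1_sub (LY x xT) (LY y yT)).
have Lbound := L1_add (L1_cst S T (eps / 2)) (L1_scale cu LdY).
apply: le_lt_trans (Ehat_dist (HL x xT) (HL y yT)) _.
apply: le_lt_trans (Ehat_mono (L1_abs (L1_sub (HL x xT) (HL y yT))) Lbound _) _.
  move=> om; apply: le_trans (ler_distD (hbar y om (Y x om)) _ _) _.
  apply: lerD; last exact: (hlip y om (Y x om) (Y y om) yT).2.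
  by apply/ltW/Hd1; rewrite ?subrr ?normr0.
apply: le_lt_trans (Ehat_subadd (L1_cst S T (eps / 2)) (L1_scale cu LdY)) _.
rewrite Ehat_cst Ehat_poshom //; last by lra.
have : cu * Ehat S (fun om => `|Y x om - Y y om|) <= cu * (eps / 2 / (cu + 1)).
  by rewrite ler_wpM2l ?ltW ?Hd2 //; lra.
have : cu * (eps / 2 / (cu + 1)) < eps / 2.
  by rewrite mulrCA gtr_pMr // ltr_pdivrMr // mul1r; lra.
lra.
Qed.

End SublinearExpectation.

Theorem lemma3p5 (R : realType) (T : R) (hT : 0 < T)
  (S : sublinear_space T) (l u : R -> R) (hbar : R -> Omega S -> R -> R)
  (Y : R -> Omega S -> R) (Rf : R -> R) :
  barriers_ok T l u -> hbar_ok hbar ->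
  C1G Y -> CTB T Rf ->
  (forall t, 0 <= t <= T -> L1 S T (fun om => hbar t om (Y t om))) ->
  (forall t, 0 <= t <= T ->
     l t <= Ehat S (fun om => hbar t om (Y t om)) <= u t) ->
  let e := fun v => Ehat S (fun om => hbar v om (Y v om)) in
  (forall s t, 0 <= s -> s <= t -> t <= T ->
     RS_int_le0 (fun v => e v - l v) Rf s t /\
     RS_int_le0 (fun v => e v - u v) Rf s t)
  <->
  ((forall s t, 0 <= s -> s < t -> t <= T ->
      ((forall v, s < v <= t -> e v < u v) -> Rf s <= Rf t) /\
      ((forall v, s < v <= t -> l v < e v) -> Rf t <= Rf s)) /\
   (forall v, 0 <= v <= T ->
      (e v < u v -> dR_nonneg_at T Rf v) /\
      (l v < e v -> dR_nonpos_at T Rf v))).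
Proof.
move=> [cl [cu _]] hok hY [cR [bvR _]] HL bounds e.
have ce : continuous_on_itv e 0 T := Ehat_hbar_continuous hok hY HL.
move: cl cu cR => /within_continuous_on_itv cl /within_continuous_on_itv cu
  /within_continuous_on_itv cR.
have HV := bounded_variation_dominates bvR.
have ceu := continuous_on_itvB ce cu.
have cel := continuous_on_itvN (continuous_on_itvB ce cl).
have e_le_u v : 0 <= v <= T -> e v - u v <= 0.
  by move/bounds/andP=> [_]; rewrite subr_le0.
have l_le_e v : 0 <= v <= T -> - (e v - l v) <= 0.
  by move/bounds/andP=> [+ _]; rewrite oppr_le0 subr_ge0.
have upper := RS_int_le0_onP ceu cR HV e_le_u.
have lower :=
  RS_int_le0_onP cel (continuous_on_itvN cR) (dominates_incrementsN HV) l_le_e.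
split=> [Hint | [Hmono _] s t s0 st tT].
  have mu : nondecreasing_where_neg (fun v => e v - u v) Rf 0 T.
    by apply/upper => s t s0 st tT; apply: (Hint s t s0 st tT).2.
  have ml : nondecreasing_where_neg (fun v => - (e v - l v)) (fun v => - Rf v) 0 T.
    by apply/lower => s t s0 st tT; apply/RS_int_le0N; apply: (Hint s t s0 st tT).1.
  split=> [s t s0 st tT | v vT]; split=> Hv.
  - by apply: mu => // w /Hv; rewrite subr_lt0.
  - by rewrite -lerN2; apply: ml => // w /Hv; rewrite oppr_lt0 subr_gt0.
  - by apply: nondecreasing_where_neg_dR ceu mu vT _; rewrite subr_lt0.
  - apply/dR_nonpos_atN/(nondecreasing_where_neg_dR cel ml vT).
    by rewrite oppr_lt0 subr_gt0.
split.
  apply/RS_int_le0N; apply: (lower.2 _ s t) => // x y x0 xy yT Hv; rewrite lerN2.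
  by apply: (Hmono x y x0 xy yT).2 => w /Hv; rewrite oppr_lt0 subr_gt0.
apply: (upper.2 _ s t) => // x y x0 xy yT Hv.
by apply: (Hmono x y x0 xy yT).1 => w /Hv; rewrite subr_lt0.
Qed.
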